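(* Let $F$ be a finitary set functor with a presentation $\varepsilon\colon H_\Sigma\to F$, let $X\neq\emptyset$ be a set and choose $p'\in\Sigma_0\cup X$. Then the free algebra $\Phi X$ and the free completely iterative algebra $\Psi X$ on $X$, both ordered by cutting, have the same conservative completion (i.e. there is a cpo $C$ and an order embedding $j\colon\Psi X\to C$ such that $(C,j)$ is a conservative completion of $\Psi X$ and $(C,j\cdot m_X)$ is a conservative completion of $\Phi X$). Moreover, ordering $F(\Phi X)+X$ so that $\varphi_X$ is an order isomorphism and $F(\Psi X)+X$ so that $\tau_X^{-1}$ is one, $\tau_X^{-1}$ is the unique continuous map $g\colon F(\Psi X)+X\to\Psi X$ with $g\cdot(Fm_X+\mathrm{id}_X)=m_X\cdot\varphi_X$.
   Context: Finitary: preserves filtered colimits. $(\Phi X,\varphi_X\colon F(\Phi X)+X\to\Phi X)$ is the initial algebra of $F(-)+X$ (= free $F$-algebra on $X$); $(\Psi X,\tau_X\colon\Psi X\to F(\Psi X)+X)$ is the terminal coalgebra of $F(-)+X$, which is the free completely iterative $F$-algebra on $X$. $m_X\colon\Phi X\to\Psi X$ is the unique coalgebra homomorphism from $(\Phi X,\varphi_X^{-1})$ to $(\Psi X,\tau_X)$ (injective). Presentation: finitary signature $\Sigma$, $H_\Sigma Y=\coprod_n\Sigma_n\times Y^n$, natural $\varepsilon\colon H_\Sigma\to F$ with surjective components; $\varepsilon+\mathrm{id}_X$ presents $F(-)+X$ by the signature $\Sigma+X$ (elements of $X$ nullary). $\Sigma$-trees over $X$: ordered rooted trees labelled in $\Sigma+X$,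 a node labelled in $\Sigma_n$ having $n$ children, elements of $X$ only at leaves; $\Psi_\Sigma X$ = all of them (with $\tau'_X$ = inverse of tree tupling), $\Phi_\Sigma X$ = finite ones. $\partial'_ns$: delete nodes of height $>n$ and relabel nodes of height $n$ by $p'$. $h_X\colon\Phi_\Sigma X\to\Phi X$: the unique homomorphism of $(H_\Sigma(-)+X)$-algebras into $(\Phi X,\varphi_X\cdot(\varepsilon_{\Phi X}+\mathrm{id}))$; $\sim$ its kernel; $s\sim^*s'$ iff $\partial'_ns\sim\partial'_ns'$ for all $n$. $\hat k_X\colon\Psi_\Sigma X\to\Psi X$: the unique coalgebra homomorphism for $F(-)+X$ from $(\Psi_\Sigma X,(\varepsilon+\mathrm{id})\tau'_X)$; surjective with kernel $\sim^*$. Order by cutting on $\Psi X$: $x\le y$ iff $x=y$ or $x=\hat k_X(s)$, $y=\hat k_X(s')$ with $s\sim^*\partial'_ns'$ for some $n$. $\Phi X$ has the order induced via $m_X$. Continuous = monotone and preserving existing directed joins. A conservative completion of a poset $P$ is a cpo containing $P$ as a subposet closed under existing directed joins such that every continuous map from $P$ into a cpo extends uniquely to a continuous map on it. *)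

From Stdlib Require Import List.
From Stdlib Require Vectors.Fin.
Set Implicit Arguments.

Record SetFunctor := {
  Fob :> Type -> Type;
  fmap : forall A B : Type, (A -> B) -> Fob A -> Fob B;
  fmap_id : forall (A : Type) (x : Fob A), fmap (fun a : A => a) x = x;
  fmap_comp : forall (A B C : Type) (f : A -> B) (g : B -> C) (x : Fob A),
      fmap (fun a => g (f a)) x = fmap g (fmap f x) }.
Arguments fmap _ {A B} f x.

(* finitary set functor: every element of F A lies in the image of F of the
   inclusion of a finite subset (standard characterization, for set functors,
   of preservation of filtered colimits) *)
Definition finitary (F : SetFunctor) : Prop :=
  forall (A : Type) (x : F A),
    exists (l : list A) (y : F {a : A | In a l}),
      x = fmap F (@proj1_sig A (fun a => In a l)) y.

Definition sumap {A B C D : Type} (f : A -> C) (g : B -> D) (z : A + B) : C + D :=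
  match z with inl a => inl (f a) | inr b => inr (g b) end.

(* a finitary signature: Sig n = Sigma_n, the n-ary operation symbols *)
Definition HSig (Sig : nat -> Type) (Y : Type) : Type :=
  {n : nat & (Sig n * (Fin.t n -> Y))%type}.

Definition Hmap {Sig : nat -> Type} {Y Z : Type} (f : Y -> Z) (t : HSig Sig Y)
  : HSig Sig Z :=
  match t with existT _ n (s, v) => existT _ n (s, fun i => f (v i)) end.

Definition presentation (Sig : nat -> Type) (F : SetFunctor)
    (eps : forall Y : Type, HSig Sig Y -> F Y) : Prop :=
  (forall (Y Z : Type) (f : Y -> Z) (t : HSig Sig Y),
      eps Z (Hmap f t) = fmap F f (eps Y t)) /\
  (forall (Y : Type) (y : F Y), exists t : HSig Sig Y, eps Y t = y).

Definition initial_algebra (F : SetFunctor) (X P : Type) (phi : F P + X -> P) : Prop :=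
  forall (A : Type) (a : F A + X -> A),
    (exists f : P -> A, forall z, f (phi z) = a (sumap (fmap F f) (fun x => x) z)) /\
    (forall f g : P -> A,
        (forall z, f (phi z) = a (sumap (fmap F f) (fun x => x) z)) ->
        (forall z, g (phi z) = a (sumap (fmap F g) (fun x => x) z)) ->
        forall p, f p = g p).

Definition terminal_coalgebra (F : SetFunctor) (X P : Type) (tau : P -> F P + X) : Prop :=
  forall (A : Type) (a : A -> F A + X),
    (exists f : A -> P, forall z, tau (f z) = sumap (fmap F f) (fun x => x) (a z)) /\
    (forall f g : A -> P,
        (forall z, tau (f z) = sumap (fmap F f) (fun x => x) (a z)) ->
        (forall z, tau (g z) = sumap (fmap F g) (fun x => x) (a z)) ->
        forall p, f p = g p).

Inductive ftree (Sig : nat -> Type) (X : Type) : Type :=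
| FLeaf : X -> ftree Sig X
| FNode : forall n : nat, Sig n -> (Fin.t n -> ftree Sig X) -> ftree Sig X.

CoInductive itree (Sig : nat -> Type) (X : Type) : Type :=
| ILeaf : X -> itree Sig X
| INode : forall n : nat, Sig n -> (Fin.t n -> itree Sig X) -> itree Sig X.

Arguments FLeaf {Sig X} x.
Arguments FNode {Sig X n} s ts.
Arguments ILeaf {Sig X} x.
Arguments INode {Sig X n} s ts.

Definition tau' {Sig : nat -> Type} {X : Type} (t : itree Sig X)
  : HSig Sig (itree Sig X) + X :=
  match t with
  | ILeaf x => inr x
  | @INode _ _ n s ts => inl (existT _ n (s, ts))
  end.

Fixpoint emb {Sig : nat -> Type} {X : Type} (t : ftree Sig X) : itree Sig X :=
  match t with
  | FLeaf x => ILeaf x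
  | @FNode _ _ n s ts => INode s (fun i => emb (ts i))
  end.

Definition single {Sig : nat -> Type} {X : Type} (p' : Sig 0 + X) : ftree Sig X :=
  match p' with
  | inl s => FNode s (fun i : Fin.t 0 => Fin.case0 (fun _ => ftree Sig X) i)
  | inr x => FLeaf x
  end.

(* partial' n s : delete nodes of height > n, relabel nodes of height n by p'
   (root has height 0) *)
Fixpoint cut {Sig : nat -> Type} {X : Type} (p' : Sig 0 + X) (n : nat)
    (t : itree Sig X) : ftree Sig X :=
  match n with
  | 0 => single p'
  | S n' =>
      match t with
      | ILeaf x => FLeaf x
      | @INode _ _ _ s ts => FNode s (fun i => cut p' n' (ts i))
      end
  end.

(* h_X : Phi_Sigma X -> Phi X, the unique (H_Sigma(-)+X)-algebra homomorphism
   into (Phi X, phi_X . (eps + id)) *)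
Fixpoint hX {Sig : nat -> Type} {F : SetFunctor} {X P : Type}
    (eps : forall Y : Type, HSig Sig Y -> F Y) (phi : F P + X -> P)
    (t : ftree Sig X) : P :=
  match t with
  | FLeaf x => phi (inr x)
  | @FNode _ _ n s ts => phi (inl (eps P (existT _ n (s, fun i => hX eps phi (ts i)))))
  end.

Definition simstar {Sig : nat -> Type} {F : SetFunctor} {X P : Type}
    (eps : forall Y : Type, HSig Sig Y -> F Y) (phi : F P + X -> P)
    (p' : Sig 0 + X) (s s' : itree Sig X) : Prop :=
  forall n, hX eps phi (cut p' n s) = hX eps phi (cut p' n s').

Definition cut_le {Sig : nat -> Type} {F : SetFunctor} {X P Q : Type}
    (eps : forall Y : Type, HSig Sig Y -> F Y) (phi : F P + X -> P)
    (p' : Sig 0 + X) (khat : itree Sig X -> Q) (x y : Q) : Prop :=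
  x = y \/
  exists (s s' : itree Sig X) (n : nat),
    x = khat s /\ y = khat s' /\ simstar eps phi p' s (emb (cut p' n s')).

Definition poset {P : Type} (le : P -> P -> Prop) : Prop :=
  (forall a, le a a) /\ (forall a b c, le a b -> le b c -> le a c) /\
  (forall a b, le a b -> le b a -> a = b).

Definition directed {P : Type} (le : P -> P -> Prop) (D : P -> Prop) : Prop :=
  (exists d, D d) /\
  (forall a b, D a -> D b -> exists c, D c /\ le a c /\ le b c).

Definition is_lub {P : Type} (le : P -> P -> Prop) (D : P -> Prop) (x : P) : Prop :=
  (forall d, D d -> le d x) /\ (forall u, (forall d, D d -> le d u) -> le x u).

(* cpo = poset with joins of all directed subsets (no least element required) *)
Definition cpo {P : Type} (le : P -> P -> Prop) : Prop :=
  poset le /\ forall D, directed le D -> exists x, is_lub le D x.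

Definition monotone {P Q : Type} (leP : P -> P -> Prop) (leQ : Q -> Q -> Prop)
    (f : P -> Q) : Prop :=
  forall a b, leP a b -> leQ (f a) (f b).

Definition image {P Q : Type} (f : P -> Q) (D : P -> Prop) : Q -> Prop :=
  fun q => exists d, D d /\ f d = q.

Definition continuous {P Q : Type} (leP : P -> P -> Prop) (leQ : Q -> Q -> Prop)
    (f : P -> Q) : Prop :=
  monotone leP leQ f /\
  forall D x, directed leP D -> is_lub leP D x -> is_lub leQ (image f D) (f x).

Definition conservative_completion {P C : Type} (leP : P -> P -> Prop)
    (leC : C -> C -> Prop) (j : P -> C) : Prop :=
  cpo leC /\
  (forall a b, j a = j b -> a = b) /\
  (forall a b, leP a b <-> leC (j a) (j b)) /\
  (forall D x, directed leP D -> is_lub leP D x -> is_lub leC (image j D) (j x)) /\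
  (forall (Q : Type) (leQ : Q -> Q -> Prop), cpo leQ ->
     forall f : P -> Q, continuous leP leQ f ->
       exists g : C -> Q,
         continuous leC leQ g /\ (forall a, g (j a) = f a) /\
         (forall g' : C -> Q, continuous leC leQ g' -> (forall a, g' (j a) = f a) ->
            forall c, g' c = g c)).

From Stdlib Require Import List.
From Stdlib Require Vectors.Fin.
From Stdlib Require Import Arith Lia Classical ClassicalEpsilon
  FunctionalExtensionality PropExtensionality ProofIrrelevance.

(* Instead of working with trees, we cut elements of PsiX directly: cutPsi n
   unfolds tau n times into PhiX, putting the label p' at height n, and
   approx n y := m (cutPsi n y) is the n-th cutting of y.  The order by
   cutting is then "x = y or x is a cutting of y" ([below]); the trees only
   reappear at the end, where khat transports the tree order onto [below].

   1. Order theory: for a poset in which elements with a common upper bound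
      are comparable, the ideals closed under existing directed joins form a
      conservative completion; a conservative completion of P restricts to a
      subposet A when continuous maps on A extend uniquely to P.
   2. Separation: elements of PsiX with equal cuttings are equal (this uses
      finitarity of F and terminality of PsiX); elements of PhiX are fixed by
      deep cuttings (initiality), so m is injective.
   3. [below] is a forest order in which every element is the directed join of
      its cuttings, which lie in the image of m; hence continuous maps on PhiX
      extend uniquely to PsiX, and the ideal completion of PsiX serves both.
   4. Continuous maps out of PsiX are determined on the image of m, which
      pins down tau_inv as the unique continuous extension of m . phi. *)

Section Posets.
Context {P : Type} (le : P -> P -> Prop).

Lemma lub_unique : poset le -> forall D x y, is_lub le D x -> is_lub le D y -> x = y.
Proof.
  intros (_ & _ & anti) D x y [Ux Lx] [Uy Ly].
  apply anti; [apply Lx | apply Ly]; assumption.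
Qed.

Lemma is_lub_ext D D' x : (forall a, D a <-> D' a) -> is_lub le D x -> is_lub le D' x.
Proof.
  intros E [Hub Hleast]. split.
  - intros d Hd. apply Hub, E, Hd.
  - intros u Hu. apply Hleast. intros d Hd. apply Hu, E, Hd.
Qed.

Lemma lub_of_greatest D x : D x -> (forall d, D d -> le d x) -> is_lub le D x.
Proof. intros Hx Hub. split; auto. Qed.

Lemma image_directed {Q : Type} (leQ : Q -> Q -> Prop) (f : P -> Q) :
  monotone le leQ f -> forall D, directed le D -> directed leQ (image f D).
Proof.
  intros Hf D [[d Hd] Hdir]. split; [exists (f d), d; auto |].
  intros a b (a' & Ha' & <-) (b' & Hb' & <-).
  destruct (Hdir a' b') as (c & Hc & Hac & Hbc); auto.
  exists (f c). split; [exists c; auto | split; apply Hf; auto].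
Qed.

Lemma continuous_id : continuous le le (fun a => a).
Proof.
  split; [intros a b H; exact H |]. intros D x _ Hx.
  eapply is_lub_ext; [| exact Hx]. intros a. split; [exists a; auto | intros (b & Hb & <-); exact Hb].
Qed.
End Posets.

Lemma image_image {A B C : Type} (f : A -> B) (g : B -> C) D c :
  image g (image f D) c <-> image (fun a => g (f a)) D c.
Proof.
  split.
  - intros (b & (a & Ha & <-) & <-). exists a; auto.
  - intros (a & Ha & <-). exists (f a). split; [exists a|]; auto.
Qed.

Lemma continuous_comp {A B C : Type} (leA : A -> A -> Prop) (leB : B -> B -> Prop)
    (leC : C -> C -> Prop) (f : A -> B) (g : B -> C) :
  continuous leA leB f -> continuous leB leC g -> continuous leA leC (fun a => g (f a)).
Proof.
  intros [Mf Lf] [Mg Lg]. split; [intros a b H; apply Mg, Mf, H |].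
  intros D x HD Hx.
  eapply is_lub_ext; [intros c; apply image_image |].
  exact (Lg _ _ (image_directed _ _ _ Mf D HD) (Lf D x HD Hx)).
Qed.

Section IdealCompletion.
Context {P : Type} (le : P -> P -> Prop) (le_poset : poset le).

Let le_refl a : le a a.
Proof. exact (proj1 le_poset a). Qed.
Let le_trans a b c : le a b -> le b c -> le a c.
Proof. exact (proj1 (proj2 le_poset) a b c). Qed.

Definition ideal (I : P -> Prop) : Prop :=
  (exists a, I a) /\ (forall a b, I b -> le a b -> I a) /\
  (forall a b, I a -> I b -> exists c, I c /\ le a c /\ le b c).

Definition join_closed (I : P -> Prop) : Prop :=
  forall D x, directed le D -> (forall d, D d -> I d) -> is_lub le D x -> I x.

Definition Ideal : Type := {I : P -> Prop | ideal I /\ join_closed I}.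

Definition ideal_le (I J : Ideal) : Prop := forall a, proj1_sig I a -> proj1_sig J a.

Lemma Ideal_ideal (I : Ideal) : ideal (proj1_sig I).
Proof. exact (proj1 (proj2_sig I)). Qed.

Lemma Ideal_join_closed (I : Ideal) : join_closed (proj1_sig I).
Proof. exact (proj2 (proj2_sig I)). Qed.

Lemma ideal_directed I : ideal I -> directed le I.
Proof. intros (Hne & _ & Hdir). split; assumption. Qed.

Lemma down_Ideal y : ideal (fun z => le z y) /\ join_closed (fun z => le z y).
Proof.
  split; [split; [exists y; apply le_refl | split] |].
  - intros a b Hb Hab. eauto.
  - intros a b Ha Hb. exists y. auto.
  - intros D x _ HDy [_ Hleast]. apply Hleast. exact HDy.
Qed.

Definition down (y : P) : Ideal := exist _ (fun z => le z y) (down_Ideal y).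

Lemma Ideal_ext (I J : Ideal) : ideal_le I J -> ideal_le J I -> I = J.
Proof.
  destruct I as [I pI], J as [J pJ]. unfold ideal_le; simpl. intros HIJ HJI.
  apply subset_eq_compat. apply functional_extensionality. intros a.
  apply propositional_extensionality. split; auto.
Qed.

Lemma ideal_le_poset : poset ideal_le.
Proof.
  split; [| split].
  - intros I a Ha. exact Ha.
  - intros I J K HIJ HJK a Ha. auto.
  - exact Ideal_ext.
Qed.

Definition union (DD : Ideal -> Prop) (a : P) : Prop := exists I, DD I /\ proj1_sig I a.

Lemma union_ideal DD : directed ideal_le DD -> ideal (union DD).
Proof.
  intros [[I HI] Hdir]. destruct (Ideal_ideal I) as [[a Ha] _].
  split; [| split].
  - exists a, I. auto.
  - intros x y (J & HJ & Hy) Hxy. exists J. split; auto.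
    destruct (Ideal_ideal J) as (_ & Jdown & _). eauto.
  - intros x y (J1 & HJ1 & Hx) (J2 & HJ2 & Hy).
    destruct (Hdir J1 J2) as (J3 & HJ3 & L1 & L2); auto.
    destruct (Ideal_ideal J3) as (_ & _ & J3dir).
    destruct (J3dir x y) as (c & Hc & Hxc & Hyc); auto.
    exists c. split; auto. exists J3. auto.
Qed.

Hypothesis le_forest : forall a b u, le a u -> le b u -> le a b \/ le b a.

(* In a forest order, an ideal without a join in P is join-closed: a directed
   subset of it is either bounded inside it, or its join bounds the ideal. *)
Lemma ideal_without_lub_join_closed U :
  ideal U -> ~ (exists x, is_lub le U x) -> join_closed U.
Proof.
  intros (_ & Udown & Udir) Hnolub D z _ HDU Hz.
  destruct (classic (exists u, U u /\ forall d, D d -> le d u))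
    as [(u & Hu & Hub) | Hunbounded].
  - apply (Udown z u Hu). apply (proj2 Hz). exact Hub.
  - exfalso. apply Hnolub. exists z. split.
    + intros u Hu.
      destruct (classic (exists d, D d /\ ~ le d u)) as [(d & Hd & Hdu) | Hall].
      * destruct (Udir u d Hu (HDU d Hd)) as (c & _ & Huc & Hdc).
        destruct (le_forest u d c Huc Hdc) as [Hud | Hdu']; [| contradiction].
        apply le_trans with d; [exact Hud | apply (proj1 Hz); exact Hd].
      * exfalso. apply Hunbounded. exists u. split; [exact Hu |].
        intros d Hd. apply NNPP. intros Hn. apply Hall. eauto.
    + intros w Hw. apply (proj2 Hz). intros d Hd. apply Hw, HDU, Hd.
Qed.

(* The join of a directed family of ideals is the principal ideal of the join
   of their union if that join exists, and the union itself otherwise. *)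
Lemma ideal_directed_join DD : directed ideal_le DD ->
  exists K, is_lub ideal_le DD K /\
    forall k, proj1_sig K k -> union DD k \/ exists x, is_lub le (union DD) x /\ le k x.
Proof.
  intros HD. pose proof (union_ideal DD HD) as HU.
  destruct (classic (exists x, is_lub le (union DD) x)) as [[x Hx] | Hnolub].
  - exists (down x). split; [split |].
    + intros I HI a Ha. apply (proj1 Hx). exists I. auto.
    + intros J HJ a Hax. destruct (Ideal_ideal J) as (_ & Jdown & _).
      apply (Jdown a x); [| exact Hax].
      apply (Ideal_join_closed J (union DD) x (ideal_directed _ HU)); [| exact Hx].
      intros d (I & HI & Hd). exact (HJ I HI d Hd).
    + intros k Hk. right. exists x. auto.
  - exists (exist _ (union DD) (conj HU (ideal_without_lub_join_closed _ HU Hnolub))).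
    split; [split |].
    + intros I HI a Ha. exists I. auto.
    + intros J HJ a (I & HI & Ha). exact (HJ I HI a Ha).
    + intros k Hk. left. exact Hk.
Qed.

Lemma Ideal_cpo : cpo ideal_le.
Proof.
  split; [exact ideal_le_poset |].
  intros DD HD. destruct (ideal_directed_join DD HD) as (K & HK & _). eauto.
Qed.

Lemma down_lub D x : directed le D -> is_lub le D x -> is_lub ideal_le (image down D) (down x).
Proof.
  intros HD Hx. split.
  - intros I (d & Hd & <-) a Ha. apply le_trans with d; [exact Ha | apply (proj1 Hx), Hd].
  - intros J HJ a Hax. destruct (Ideal_ideal J) as (_ & Jdown & _).
    apply (Jdown a x); [| exact Hax].
    apply (Ideal_join_closed J D x HD); [| exact Hx].
    intros d Hd. apply (HJ (down d)); [exists d; auto | apply le_refl].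
Qed.

Lemma Ideal_join_of_downs (c : Ideal) :
  directed ideal_le (image down (proj1_sig c)) /\ is_lub ideal_le (image down (proj1_sig c)) c.
Proof.
  destruct (Ideal_ideal c) as ([a Ha] & Cdown & Cdir). split; [split | split].
  - exists (down a), a. auto.
  - intros I J (x & Hx & <-) (y & Hy & <-). destruct (Cdir x y Hx Hy) as (z & Hz & Hxz & Hyz).
    exists (down z). split; [exists z; auto |].
    split; intros w Hw; simpl in *; eauto.
  - intros I (x & Hx & <-) w Hw. simpl in Hw. eauto.
  - intros J HJ w Hw. apply (HJ (down w)); [exists w; auto | apply le_refl].
Qed.

Section Extension.
Context {Q : Type} (leQ : Q -> Q -> Prop) (HQ : cpo leQ) (f : P -> Q)
  (Hf : continuous le leQ f).

Lemma ideal_image_has_join (c : Ideal) : exists q, is_lub leQ (image f (proj1_sig c)) q.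
Proof.
  apply (proj2 HQ). apply (image_directed le); [exact (proj1 Hf) |].
  apply ideal_directed, Ideal_ideal.
Qed.

Definition ideal_extension (c : Ideal) : Q :=
  proj1_sig (constructive_indefinite_description _ (ideal_image_has_join c)).

Lemma ideal_extension_spec c : is_lub leQ (image f (proj1_sig c)) (ideal_extension c).
Proof. exact (proj2_sig (constructive_indefinite_description _ (ideal_image_has_join c))). Qed.

Lemma ideal_extension_down a : ideal_extension (down a) = f a.
Proof.
  eapply lub_unique; [exact (proj1 HQ) | apply ideal_extension_spec |].
  apply lub_of_greatest; [exists a; split; [apply le_refl | reflexivity] |].
  intros q (z & Hz & <-). apply (proj1 Hf), Hz.
Qed.

Lemma ideal_extension_monotone : monotone ideal_le leQ ideal_extension.
Proof.
  intros I J HIJ. apply (proj2 (ideal_extension_spec I)).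
  intros q (z & Hz & <-). apply (proj1 (ideal_extension_spec J)). exists z. auto.
Qed.

Lemma ideal_extension_continuous : continuous ideal_le leQ ideal_extension.
Proof.
  destruct HQ as [(_ & leQ_trans & _) _].
  split; [exact ideal_extension_monotone |].
  intros DD K HD HK. destruct (ideal_directed_join DD HD) as (K0 & HK0 & HKcases).
  assert (K0 = K) as -> by (eapply lub_unique; eauto using ideal_le_poset).
  split.
  - intros q (I & HI & <-). apply ideal_extension_monotone, (proj1 HK), HI.
  - intros u Hu. apply (proj2 (ideal_extension_spec K)). intros q (k & Hk & <-).
    assert (Hbound : forall a, union DD a -> leQ (f a) u).
    { intros a (I & HI & Ha). apply (leQ_trans _ (ideal_extension I)).
      - apply (proj1 (ideal_extension_spec I)). exists a. auto.
      - apply Hu. exists I. auto. }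
    destruct (HKcases k Hk) as [Hunion | (x & Hx & Hkx)]; [auto |].
    apply (leQ_trans _ (f x)); [apply (proj1 Hf), Hkx |].
    apply (proj2 ((proj2 Hf) _ _ (ideal_directed _ (union_ideal DD HD)) Hx)).
    intros q (a & Ha & <-). auto.
Qed.

Lemma ideal_extension_unique g : continuous ideal_le leQ g ->
  (forall a, g (down a) = f a) -> forall c, g c = ideal_extension c.
Proof.
  intros [_ Lg] Hg c. destruct (Ideal_join_of_downs c) as [Hdir Hlub].
  eapply lub_unique; [exact (proj1 HQ) | exact (Lg _ _ Hdir Hlub) |].
  eapply is_lub_ext; [| apply ideal_extension_spec].
  intros q. rewrite image_image. split; intros (a & Ha & <-); exists a; auto.
Qed.
End Extension.

Theorem ideal_completion_conservative : conservative_completion le ideal_le down.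
Proof.
  split; [exact Ideal_cpo | split; [| split; [| split]]].
  - intros a b E. apply (proj2 (proj2 le_poset)).
    + change (proj1_sig (down b) a). rewrite <- E. apply le_refl.
    + change (proj1_sig (down a) b). rewrite E. apply le_refl.
  - intros a b. split.
    + intros Hab z Hz. simpl in *. eauto.
    + intros H. apply (H a), le_refl.
  - exact down_lub.
  - intros Q leQ HQ f Hf. exists (ideal_extension leQ HQ f Hf).
    split; [apply ideal_extension_continuous |].
    split; [apply ideal_extension_down | apply ideal_extension_unique].
Qed.
End IdealCompletion.

Lemma conservative_completion_restrict {A P C : Type} (leA : A -> A -> Prop)
    (le : P -> P -> Prop) (leC : C -> C -> Prop) (m : A -> P) (j : P -> C) :
  conservative_completion le leC j ->
  (forall a b, m a = m b -> a = b) ->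
  (forall a b, leA a b <-> le (m a) (m b)) ->
  (forall D x, directed leA D -> is_lub leA D x -> is_lub le (image m D) (m x)) ->
  (forall (Q : Type) (leQ : Q -> Q -> Prop), cpo leQ ->
     forall f : A -> Q, continuous leA leQ f ->
       exists fh : P -> Q, continuous le leQ fh /\ (forall a, fh (m a) = f a) /\
         (forall h, continuous le leQ h -> (forall a, h (m a) = f a) -> forall y, h y = fh y)) ->
  conservative_completion leA leC (fun a => j (m a)).
Proof.
  intros (Hcpo & Hjinj & Hjiff & Hjlub & Hjext) Hminj Hmiff Hmlub Hmext.
  assert (Mm : monotone leA le m) by (intros a b; apply Hmiff).
  split; [exact Hcpo | split; [| split; [| split]]].
  - intros a b E. apply Hminj, Hjinj, E.
  - intros a b. rewrite Hmiff. apply Hjiff.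
  - intros D x HD Hx. eapply is_lub_ext; [intros c; apply image_image |].
    exact (Hjlub _ _ (image_directed _ _ _ Mm D HD) (Hmlub D x HD Hx)).
  - intros Q leQ HQ f Hf. destruct (Hmext Q leQ HQ f Hf) as (fh & Hfh & Hfhm & Hfhu).
    destruct (Hjext Q leQ HQ fh Hfh) as (g & Hg & Hgj & Hgu).
    exists g. split; [exact Hg | split].
    + intros a. rewrite Hgj. apply Hfhm.
    + intros g' Hg' Hg'f. apply Hgu; [exact Hg' |].
      apply (Hfhu (fun y => g' (j y))); [| exact Hg'f].
      apply (continuous_comp le leC leQ); [split; [intros a b; apply Hjiff | exact Hjlub] | exact Hg'].
Qed.

Lemma fmap_ext (F : SetFunctor) {A B : Type} (f g : A -> B) x :
  (forall a, f a = g a) -> fmap F f x = fmap F g x.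
Proof. intros H. replace g with f by (apply functional_extensionality; exact H). reflexivity. Qed.

Lemma fmap_fmap (F : SetFunctor) {A B C : Type} (f : A -> B) (g : B -> C) x :
  fmap F g (fmap F f x) = fmap F (fun a => g (f a)) x.
Proof. symmetry. apply fmap_comp. Qed.

Lemma finitary_common_support (F : SetFunctor) (HF : finitary F) {A : Type} (u u' : F A) :
  exists (L : list A) (v v' : F {a : A | In a L}),
    u = fmap F (@proj1_sig A (fun a => In a L)) v /\
    u' = fmap F (@proj1_sig A (fun a => In a L)) v'.
Proof.
  destruct (HF A u) as (l & w & ->), (HF A u') as (l' & w' & ->).
  exists (l ++ l').
  exists (fmap F (fun s : {a | In a l} =>
            exist (fun a => In a (l ++ l')) (proj1_sig s) (in_or_app _ _ _ (or_introl (proj2_sig s)))) w).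
  exists (fmap F (fun s : {a | In a l'} =>
            exist (fun a => In a (l ++ l')) (proj1_sig s) (in_or_app _ _ _ (or_intror (proj2_sig s)))) w').
  split; rewrite fmap_fmap; reflexivity.
Qed.

Lemma initial_algebra_invertible {F : SetFunctor} {X P : Type} {phi : F P + X -> P} :
  @initial_algebra F X P phi ->
  exists phiinv : P -> F P + X, (forall z, phiinv (phi z) = z) /\ (forall a, phi (phiinv a) = a).
Proof.
  intros Hphi. destruct (Hphi (F P + X)%type (sumap (fmap F phi) (fun x => x))) as [[f Hf] _].
  assert (Hsection : forall a, phi (f a) = a).
  { apply (proj2 (Hphi P phi) (fun a => phi (f a)) (fun a => a)).
    - intros z. rewrite Hf. destruct z; simpl; [rewrite fmap_fmap |]; reflexivity.
    - intros z. destruct z; simpl; [rewrite fmap_id |]; reflexivity. }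
  exists f. split; [| exact Hsection].
  intros z. rewrite Hf. destruct z as [u | x]; simpl; [| reflexivity].
  rewrite fmap_fmap, (fmap_ext F _ (fun a => a)), fmap_id; auto.
Qed.

Lemma terminal_coalgebra_invertible {F : SetFunctor} {X P : Type} {tau : P -> F P + X} :
  @terminal_coalgebra F X P tau ->
  exists tauinv : F P + X -> P, (forall y, tauinv (tau y) = y) /\ (forall w, tau (tauinv w) = w).
Proof.
  intros Htau. destruct (Htau (F P + X)%type (sumap (fmap F tau) (fun x => x))) as [[f Hf] _].
  assert (Hretract : forall y, f (tau y) = y).
  { apply (proj2 (Htau P tau) (fun a => f (tau a)) (fun a => a)).
    - intros z. rewrite Hf. destruct (tau z); simpl; [rewrite fmap_fmap |]; reflexivity.
    - intros z. destruct (tau z); simpl; [rewrite fmap_id |]; reflexivity. }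
  exists f. split; [exact Hretract |].
  intros w. rewrite Hf. destruct w as [u | x]; simpl; [| reflexivity].
  rewrite fmap_fmap, (fmap_ext F _ (fun a => a)), fmap_id; auto.
Qed.

Lemma bounded_greatest (Q : nat -> Prop) N : (exists k, k <= N /\ Q k) ->
  exists k, k <= N /\ Q k /\ forall k', k' <= N -> Q k' -> k' <= k.
Proof.
  induction N as [| N IH]; intros (k & Hk & Qk).
  - exists 0. repeat split; [lia | replace 0 with k by lia; exact Qk | lia].
  - destruct (classic (Q (S N))) as [HQ | HQ].
    + exists (S N). repeat split; auto.
    + assert (k <= N) by (destruct (Nat.eq_dec k (S N)); [subst; contradiction | lia]).
      destruct IH as (k0 & H0 & Q0 & M0); [exists k; auto |].
      exists k0. repeat split; [lia | exact Q0 |]. intros k' Hk' Qk'.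
      destruct (Nat.eq_dec k' (S N)); [subst; contradiction | apply M0; auto; lia].
Qed.

Section CuttingOrder.
Variables (F : SetFunctor) (HF : finitary F) (Sig : nat -> Type)
  (eps : forall Y : Type, HSig Sig Y -> F Y) (Heps : @presentation Sig F eps)
  (X : Type) (p' : Sig 0 + X)
  (PhiX : Type) (phi : F PhiX + X -> PhiX) (Hphi : @initial_algebra F X PhiX phi)
  (PsiX : Type) (tau : PsiX -> F PsiX + X) (Htau : @terminal_coalgebra F X PsiX tau)
  (m : PhiX -> PsiX) (Hm : forall z, tau (m (phi z)) = sumap (fmap F m) (fun x => x) z).

Definition phi_inv : PhiX -> F PhiX + X :=
  proj1_sig (constructive_indefinite_description _ (initial_algebra_invertible Hphi)).

Lemma phi_inv_phi z : phi_inv (phi z) = z.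
Proof. exact (proj1 (proj2_sig (constructive_indefinite_description _ (initial_algebra_invertible Hphi))) z). Qed.

Lemma phi_phi_inv a : phi (phi_inv a) = a.
Proof. exact (proj2 (proj2_sig (constructive_indefinite_description _ (initial_algebra_invertible Hphi))) a). Qed.

Definition tau_inv : F PsiX + X -> PsiX :=
  proj1_sig (constructive_indefinite_description _ (terminal_coalgebra_invertible Htau)).

Lemma tau_inv_tau y : tau_inv (tau y) = y.
Proof. exact (proj1 (proj2_sig (constructive_indefinite_description _ (terminal_coalgebra_invertible Htau))) y). Qed.

Lemma tau_tau_inv w : tau (tau_inv w) = w.
Proof. exact (proj2 (proj2_sig (constructive_indefinite_description _ (terminal_coalgebra_invertible Htau))) w). Qed.

Lemma tau_inj y y' : tau y = tau y' -> y = y'.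
Proof. intros H. rewrite <- (tau_inv_tau y), <- (tau_inv_tau y'), H. reflexivity. Qed.

Lemma phi_inj z z' : phi z = phi z' -> z = z'.
Proof. intros H. rewrite <- (phi_inv_phi z), <- (phi_inv_phi z'), H. reflexivity. Qed.

Definition cut_label : PhiX := hX eps phi (single p').

Fixpoint cutPhi (n : nat) (a : PhiX) : PhiX :=
  match n with
  | 0 => cut_label
  | S k => match phi_inv a with
           | inl u => phi (inl (fmap F (cutPhi k) u))
           | inr x => phi (inr x)
           end
  end.

Fixpoint cutPsi (n : nat) (y : PsiX) : PhiX :=
  match n with
  | 0 => cut_label
  | S k => match tau y with
           | inl u => phi (inl (fmap F (cutPsi k) u))
           | inr x => phi (inr x)
           end
  end.

Lemma cutPhi_phi k z : cutPhi (S k) (phi z) =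
  match z with inl u => phi (inl (fmap F (cutPhi k) u)) | inr x => phi (inr x) end.
Proof. simpl. rewrite phi_inv_phi. reflexivity. Qed.

Lemma cutPhi_cut_label k : cutPhi k cut_label = cut_label.
Proof.
  destruct k as [| k]; [reflexivity |].
  unfold cut_label. destruct p' as [s | x]; cbn [single hX]; rewrite cutPhi_phi; [| reflexivity].
  rewrite <- (proj1 Heps). simpl. do 5 f_equal.
  apply functional_extensionality. intros i. apply (Fin.case0 (fun i => _ = _) i).
Qed.

Lemma cutPhi_cutPsi k : forall n y, cutPhi k (cutPsi n y) = cutPsi (min k n) y.
Proof.
  induction k as [| k IH]; intros n y; [reflexivity |]. destruct n as [| n].
  - apply cutPhi_cut_label.
  - simpl (min (S k) (S n)). simpl cutPsi.
    destruct (tau y) as [u | x]; rewrite cutPhi_phi; [| reflexivity].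
    rewrite fmap_fmap. do 2 f_equal. apply fmap_ext. intros. apply IH.
Qed.

Lemma cutPsi_m k : forall a, cutPsi k (m a) = cutPhi k a.
Proof.
  induction k as [| k IH]; intros a; [reflexivity |]. rewrite <- (phi_phi_inv a).
  destruct (phi_inv a) as [u | x]; rewrite cutPhi_phi; simpl; rewrite Hm; [| reflexivity].
  simpl. rewrite fmap_fmap. do 2 f_equal. apply fmap_ext. exact IH.
Qed.

Definition approx (n : nat) (y : PsiX) : PsiX := m (cutPsi n y).

Lemma cutPsi_approx i n y : cutPsi i (approx n y) = cutPsi (min i n) y.
Proof. unfold approx. rewrite cutPsi_m. apply cutPhi_cutPsi. Qed.

Lemma approx_approx i n y : approx i (approx n y) = approx (min i n) y.
Proof. unfold approx at 1. rewrite cutPsi_approx. reflexivity. Qed.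

Lemma cutPsi_below N k a b : cutPsi N a = cutPsi N b -> k <= N -> cutPsi k a = cutPsi k b.
Proof.
  intros H Hk. replace k with (min k N) by lia. rewrite <- !cutPhi_cutPsi, H. reflexivity.
Qed.

(* Two elements of PsiX with the same cuttings at every height are equal.
   This separation property is where finitarity of F is used. *)
Definition same_cuts (y y' : PsiX) : Prop := forall n, cutPsi n y = cutPsi n y'.

Lemma cuts_separate_finitely (pairs : list (PsiX * PsiX)) :
  exists N, forall a b, In (a, b) pairs -> cutPsi N a = cutPsi N b -> same_cuts a b.
Proof.
  induction pairs as [| [a b] pairs [N1 HN1]]; [exists 0; intros a b [] |].
  destruct (classic (same_cuts a b)) as [Hab | Hab].
  - exists N1. intros a' b' [Heq | Hin] Hcut; [injection Heq as -> ->; exact Hab | auto].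
  - apply not_all_ex_not in Hab. destruct Hab as [n0 Hn0]. exists (max N1 n0).
    intros a' b' [Heq | Hin] Hcut.
    + injection Heq as -> ->. exfalso. apply Hn0. eapply cutPsi_below; [exact Hcut | lia].
    + apply HN1; [exact Hin |]. eapply cutPsi_below; [exact Hcut | lia].
Qed.

Definition CutClass : Type := {S : PsiX -> Prop | exists y, S = same_cuts y}.

Definition cut_class (y : PsiX) : CutClass := exist _ (same_cuts y) (ex_intro _ y eq_refl).

Lemma cut_class_eq y y' : same_cuts y y' -> cut_class y = cut_class y'.
Proof.
  intros H. apply subset_eq_compat.
  apply functional_extensionality. intros z. apply propositional_extensionality.
  split; intros Hz n; [rewrite <- H | rewrite H]; apply Hz.
Qed.

Lemma cut_class_same y y' : cut_class y = cut_class y' -> same_cuts y y'.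
Proof. intros H. apply (f_equal (@proj1_sig _ _)) in H. simpl in H. rewrite H. intros n. reflexivity. Qed.

(* Finitarity: elements of F PsiX whose cuttings agree at every height have
   the same image in F CutClass, because they are supported by a finite list
   on which cut_class factors through a single cutting. *)
Lemma fmap_cut_class_compat (u u' : F PsiX) :
  (forall n, fmap F (cutPsi n) u = fmap F (cutPsi n) u') ->
  fmap F cut_class u = fmap F cut_class u'.
Proof.
  intros Hcuts. destruct (finitary_common_support F HF u u') as (L & v & v' & -> & ->).
  destruct (cuts_separate_finitely (list_prod L L)) as [N HN].
  set (h := fun p : PhiX =>
    match excluded_middle_informative (exists a, In a L /\ cutPsi N a = p) with
    | left H => cut_class (proj1_sig (constructive_indefinite_description _ H))
    | right _ => cut_class (m p)
    end).
  assert (Hh : forall a, In a L -> h (cutPsi N a) = cut_class a).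
  { intros a Ha. unfold h. destruct excluded_middle_informative as [H' | H']; [| exfalso; eauto].
    destruct (constructive_indefinite_description _ H') as (a' & Ha' & Hcut); simpl.
    apply cut_class_eq, HN; [apply in_prod |]; assumption. }
  assert (Hfactor : forall w : F {a | In a L},
    fmap F cut_class (fmap F (@proj1_sig _ _) w) = fmap F h (fmap F (cutPsi N) (fmap F (@proj1_sig _ _) w))).
  { intros w. rewrite !fmap_fmap. apply fmap_ext. intros [a Ha]. symmetry. apply Hh, Ha. }
  rewrite !Hfactor, Hcuts. reflexivity.
Qed.

(* Hence tau induces a coalgebra structure on CutClass. *)
Lemma tau_cut_class_compat y y' : same_cuts y y' ->
  sumap (fmap F cut_class) (fun x => x) (tau y) = sumap (fmap F cut_class) (fun x => x) (tau y').
Proof.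
  intros H. assert (Hn : forall n, cutPsi (S n) y = cutPsi (S n) y') by (intros n; apply H).
  simpl in Hn. destruct (tau y) as [u | x], (tau y') as [u' | x']; simpl.
  - f_equal. apply fmap_cut_class_compat. intros n.
    specialize (Hn n). apply phi_inj in Hn. injection Hn as Hn. exact Hn.
  - specialize (Hn 0). apply phi_inj in Hn. discriminate.
  - specialize (Hn 0). apply phi_inj in Hn. discriminate.
  - specialize (Hn 0). apply phi_inj in Hn. injection Hn as ->. reflexivity.
Qed.

(* Separation: the coalgebra PsiX maps into its quotient CutClass and back,
   and by terminality the round trip is the identity. *)
Theorem cuts_separate y y' : same_cuts y y' -> y = y'.
Proof.
  intros H.
  assert (Hrep : forall q : CutClass, exists z, cut_class z = q).
  { intros [S [z Hz]]. exists z. apply subset_eq_compat. symmetry. exact Hz. }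
  set (rep := fun q => proj1_sig (constructive_indefinite_description _ (Hrep q))).
  set (alpha := fun q => sumap (fmap F cut_class) (fun x => x) (tau (rep q))).
  assert (Halpha : forall z, alpha (cut_class z) = sumap (fmap F cut_class) (fun x => x) (tau z)).
  { intros z. apply tau_cut_class_compat, cut_class_same.
    exact (proj2_sig (constructive_indefinite_description _ (Hrep (cut_class z)))). }
  destruct (Htau CutClass alpha) as [[f Hf] _].
  assert (Hround : forall z, f (cut_class z) = z).
  { apply (proj2 (Htau PsiX tau) (fun z => f (cut_class z)) (fun z => z)).
    - intros w. rewrite Hf, Halpha. destruct (tau w); simpl; [rewrite fmap_fmap |]; reflexivity.
    - intros w. destruct (tau w); simpl; [rewrite fmap_id |]; reflexivity. }
  rewrite <- (Hround y), <- (Hround y'), (cut_class_eq _ _ H). reflexivity.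
Qed.

Definition finite_depth (a : PhiX) : Prop := exists N, forall k, N <= k -> cutPhi k a = a.

Lemma finite_depth_phi (w : F {a | finite_depth a} + X) :
  finite_depth (phi (sumap (fmap F (@proj1_sig _ _)) (fun x => x) w)).
Proof.
  destruct w as [w | x]; simpl.
  - destruct (HF _ w) as (l & wl & ->).
    assert (HN : exists N, forall s, In s l -> forall k, N <= k -> cutPhi k (proj1_sig s) = proj1_sig s).
    { clear wl. induction l as [| s l [N1 H1]]; [exists 0; intros s [] |].
      destruct (proj2_sig s) as [Ns HNs]. exists (max N1 Ns).
      intros s' [<- | Hin] k Hk; [apply HNs | apply H1; [exact Hin |]]; lia. }
    destruct HN as [N HN]. exists (S N). intros [| k] Hk; [lia |].
    rewrite cutPhi_phi, !fmap_fmap. do 2 f_equal. apply fmap_ext.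
    intros [s Hs]. apply HN; [exact Hs | lia].
  - exists 1. intros [| k] Hk; [lia |]. rewrite cutPhi_phi. reflexivity.
Qed.

Lemma PhiX_finite a : finite_depth a.
Proof.
  set (alpha := fun w => exist finite_depth _ (finite_depth_phi w)).
  destruct (Hphi _ alpha) as [[f Hf] _].
  assert (Hid : forall a, proj1_sig (f a) = a).
  { apply (proj2 (Hphi PhiX phi) (fun a => proj1_sig (f a)) (fun a => a)).
    - intros z. rewrite Hf. destruct z; simpl; [rewrite fmap_fmap |]; reflexivity.
    - intros z. destruct z; simpl; [rewrite fmap_id |]; reflexivity. }
  rewrite <- (Hid a). exact (proj2_sig (f a)).
Qed.

Lemma m_inj a b : m a = m b -> a = b.
Proof.
  intros H. destruct (PhiX_finite a) as [N1 H1], (PhiX_finite b) as [N2 H2].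
  rewrite <- (H1 (max N1 N2)), <- (H2 (max N1 N2)) by lia.
  rewrite <- !cutPsi_m, H. reflexivity.
Qed.

(* The order by cutting, described intrinsically: x is below y iff x is y or
   a cutting of y. *)
Definition below (x y : PsiX) : Prop := x = y \/ exists n, x = approx n y.

Definition finite_elt (y : PsiX) : Prop := exists N, approx N y = y.

Lemma approx_finite n y : finite_elt (approx n y).
Proof. exists n. rewrite approx_approx, Nat.min_id. reflexivity. Qed.

Lemma m_finite a : finite_elt (m a).
Proof.
  destruct (PhiX_finite a) as [N HN]. exists N. unfold approx. rewrite cutPsi_m, HN; auto.
Qed.

Lemma below_refl x : below x x.
Proof. left. reflexivity. Qed.

Lemma below_trans x y z : below x y -> below y z -> below x z.
Proof.
  intros [-> | [n ->]] [-> | [k ->]]; [left | right; exists k | right; exists n | right]; auto.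
  exists (min n k). apply approx_approx.
Qed.

Lemma below_antisym x y : below x y -> below y x -> x = y.
Proof.
  intros [-> | [n Hn]] [Hy | [k Hk]]; auto.
  apply cuts_separate. set (j := min n k).
  assert (Hx : x = approx j x) by (rewrite Hn at 1; rewrite Hk, approx_approx; reflexivity).
  assert (Hcut : forall i, cutPsi i x = cutPsi (min i j) x)
    by (intros i; rewrite Hx at 1; apply cutPsi_approx).
  intros i. rewrite Hk, cutPsi_approx, Hcut, (Hcut (min i k)). f_equal. unfold j. lia.
Qed.

Lemma below_poset : poset below.
Proof. split; [exact below_refl | split; [exact below_trans | exact below_antisym]]. Qed.

(* The cuttings of an element form a chain, so the order is a forest. *)
Lemma below_forest a b u : below a u -> below b u -> below a b \/ below b a.
Proof.
  intros [-> | [n ->]] [-> | [k ->]].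
  - left. apply below_refl.
  - right. right. exists k. reflexivity.
  - left. right. exists n. reflexivity.
  - destruct (Nat.le_ge_cases n k); [left | right]; right;
      [exists n | exists k]; rewrite approx_approx; f_equal; lia.
Qed.

(* Below a finite element the order has height bounded by its depth, so any
   nonempty set bounded by it has a greatest element. *)
Lemma finite_bound_greatest u N (HN : approx N u = u) (D : PsiX -> Prop) :
  (exists x, D x) -> (forall x, D x -> below x u) -> exists x0, D x0 /\ forall x, D x -> below x x0.
Proof.
  intros [x Hx] Hbelow.
  assert (Hdepth : forall x, D x -> exists k, k <= N /\ x = approx k u).
  { intros z Hz. destruct (Hbelow z Hz) as [-> | [n ->]]; [exists N; auto |].
    exists (min n N). split; [lia |]. rewrite <- approx_approx, HN. reflexivity. }
  destruct (bounded_greatest (fun k => exists x, D x /\ x = approx k u) N)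
    as (k0 & Hk0 & (x0 & Hx0 & E0) & Hmax).
  { destruct (Hdepth x Hx) as (k & ? & ?). exists k. eauto. }
  exists x0. split; [exact Hx0 |]. intros z Hz. destruct (Hdepth z Hz) as (k & Hk & Ez).
  assert (k <= k0) by (apply Hmax; eauto).
  right. exists k. rewrite Ez, E0, approx_approx. f_equal. lia.
Qed.

Lemma approx_of_greatest_cut y N : (forall n, below (approx n y) (approx N y)) -> approx N y = y.
Proof.
  intros H. apply cuts_separate. intros i. rewrite cutPsi_approx.
  assert (Hdiag : forall i, cutPsi i y = cutPsi i (approx i y))
    by (intros; rewrite cutPsi_approx, Nat.min_id; reflexivity).
  destruct (Nat.le_gt_cases i N) as [Hi | Hi]; [rewrite Nat.min_l; auto |].
  rewrite Nat.min_r by lia. destruct (H i) as [Heq | [k Hk]].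
  - rewrite (Hdiag i), Heq, cutPsi_approx, Nat.min_r by lia. reflexivity.
  - rewrite approx_approx in Hk. set (j := min k N) in *.
    rewrite (Hdiag i), Hk, cutPsi_approx, Nat.min_r by (unfold j; lia).
    assert (HN : cutPsi N y = cutPsi N (approx i y)) by (rewrite cutPsi_approx, Nat.min_l by lia; reflexivity).
    rewrite HN, Hk, cutPsi_approx, Nat.min_r by (unfold j; lia). reflexivity.
Qed.

Definition cuts (y : PsiX) (z : PsiX) : Prop := exists n, z = approx n y.

Lemma cuts_directed y : directed below (cuts y).
Proof.
  split; [exists (approx 0 y), 0; reflexivity |].
  intros a b [n ->] [k ->]. exists (approx (max n k) y). split; [exists (max n k); reflexivity |].
  split; right; [exists n | exists k]; rewrite approx_approx; f_equal; lia.
Qed.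

Lemma cuts_below_finite y u : finite_elt u -> (forall n, below (approx n y) u) -> finite_elt y.
Proof.
  intros [K HK] Hbelow.
  destruct (finite_bound_greatest u K HK (cuts y)) as (x0 & [N ->] & Hmax).
  - exists (approx 0 y), 0. reflexivity.
  - intros z [n ->]. apply Hbelow.
  - exists N. apply approx_of_greatest_cut. intros n. apply Hmax. exists n. reflexivity.
Qed.

(* An infinite upper bound of the cuttings of an infinite element y is y:
   at every height some deep cutting of y is a deep cutting of it. *)
Lemma infinite_upper_bound_of_cuts y u : ~ finite_elt y -> ~ finite_elt u ->
  (forall n, below (approx n y) u) -> same_cuts y u.
Proof.
  intros Hy Hu Hbelow i.
  destruct (classic (exists n k, i <= n /\ i <= k /\ approx n y = approx k u))
    as [(n & k & Hin & Hik & Hnk) | Hno].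
  - assert (cutPsi i y = cutPsi i (approx n y)) as -> by (rewrite cutPsi_approx, Nat.min_l; auto).
    rewrite Hnk, cutPsi_approx, Nat.min_l; auto.
  - exfalso. apply Hy, (cuts_below_finite y (approx i u) (approx_finite i u)).
    assert (Hdeep : forall n, i <= n -> below (approx n y) (approx i u)).
    { intros n Hn. destruct (Hbelow n) as [Heq | [k Hk]].
      - exfalso. apply Hu. rewrite <- Heq. apply approx_finite.
      - destruct (Nat.le_gt_cases i k); [exfalso; apply Hno; eauto |].
        right. exists k. rewrite Hk, approx_approx. f_equal. lia. }
    intros n. destruct (Nat.le_gt_cases i n); [auto |].
    apply below_trans with (approx i y); [| apply Hdeep; auto].
    right. exists n. rewrite approx_approx. f_equal. lia.
Qed.

Lemma cuts_lub y : is_lub below (cuts y) y.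
Proof.
  split; [intros z [n ->]; right; eauto |].
  intros u Hu. assert (Hu' : forall n, below (approx n y) u) by (intros n; apply Hu; exists n; reflexivity).
  destruct (classic (finite_elt y)) as [[N HN] | Hy]; [rewrite <- HN; apply Hu' |].
  destruct (classic (finite_elt u)) as [Hfu | Hinfu].
  - exfalso. exact (Hy (cuts_below_finite y u Hfu Hu')).
  - replace u with y; [apply below_refl |].
    apply cuts_separate, infinite_upper_bound_of_cuts; assumption.
Qed.

Lemma directed_lub_cuts D x : directed below D -> is_lub below D x ->
  forall n, exists d, D d /\ below (approx n x) d.
Proof.
  intros [[d0 Hd0] HD] [Hub Hleast] n. apply NNPP. intros Hno.
  assert (Hbound : forall d, D d -> below d (approx n x)).
  { intros d Hd.
    destruct (below_forest d (approx n x) x (Hub d Hd) (or_intror (ex_intro _ n eq_refl)))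
      as [H | H]; [exact H | exfalso; apply Hno; eauto]. }
  assert (Hx : approx n x = x) by (apply below_antisym; [right; eauto | apply Hleast; exact Hbound]).
  destruct (finite_bound_greatest x n Hx D) as (x0 & Hx0 & Hmax); [eauto | exact Hub |].
  apply Hno. exists x0. split; [exact Hx0 |]. rewrite Hx. apply Hleast. exact Hmax.
Qed.

(* Continuous maps out of PsiX are determined by their values on the image
   of m, since every element is the directed join of its cuttings. *)
Lemma continuous_determined_by_m {Q : Type} (leQ : Q -> Q -> Prop) (HQ : poset leQ)
    (h h' : PsiX -> Q) :
  continuous below leQ h -> continuous below leQ h' ->
  (forall a, h (m a) = h' (m a)) -> forall y, h y = h' y.
Proof.
  intros [_ Lh] [_ Lh'] Hagree y.
  eapply lub_unique; [exact HQ | exact (Lh _ _ (cuts_directed y) (cuts_lub y)) |].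
  eapply is_lub_ext; [| exact (Lh' _ _ (cuts_directed y) (cuts_lub y))].
  intros q. split; intros (z & [n ->] & <-); exists (approx n y);
    (split; [exists n; reflexivity | unfold approx; auto]).
Qed.

Definition belowPhi (a b : PhiX) : Prop := below (m a) (m b).

Lemma belowPhi_poset : poset belowPhi.
Proof.
  unfold belowPhi. split; [| split].
  - intros a. apply below_refl.
  - intros a b c. apply below_trans.
  - intros a b Hab Hba. apply m_inj, below_antisym; assumption.
Qed.

Definition cutsPhi (y : PsiX) (a : PhiX) : Prop := exists n, a = cutPsi n y.

Lemma cutsPhi_directed y : directed belowPhi (cutsPhi y).
Proof.
  split; [exists (cutPsi 0 y), 0; reflexivity |].
  intros a b [n ->] [k ->]. exists (cutPsi (max n k) y). split; [exists (max n k); reflexivity |].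
  unfold belowPhi. split; right; [exists n | exists k];
    fold (approx n y) (approx k y) (approx (max n k) y); rewrite approx_approx; f_equal; lia.
Qed.

Section ExtensionToPsi.
Context {Q : Type} (leQ : Q -> Q -> Prop) (HQ : cpo leQ) (f : PhiX -> Q)
  (Hf : continuous belowPhi leQ f).

Lemma cuts_image_has_join y : exists q, is_lub leQ (image f (cutsPhi y)) q.
Proof.
  apply (proj2 HQ). apply (image_directed belowPhi); [exact (proj1 Hf) | apply cutsPhi_directed].
Qed.

Definition cut_extension (y : PsiX) : Q :=
  proj1_sig (constructive_indefinite_description _ (cuts_image_has_join y)).

Lemma cut_extension_spec y : is_lub leQ (image f (cutsPhi y)) (cut_extension y).
Proof. exact (proj2_sig (constructive_indefinite_description _ (cuts_image_has_join y))). Qed.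

Lemma cut_extension_m a : cut_extension (m a) = f a.
Proof.
  eapply lub_unique; [exact (proj1 HQ) | apply cut_extension_spec |].
  apply lub_of_greatest.
  - destruct (PhiX_finite a) as [N HN]. exists a. split; [| reflexivity].
    exists N. rewrite cutPsi_m, HN; auto.
  - intros q (a' & [n ->] & <-). apply (proj1 Hf). unfold belowPhi. right.
    exists n. unfold approx. rewrite cutPsi_m. reflexivity.
Qed.

Lemma cut_extension_monotone : monotone below leQ cut_extension.
Proof.
  intros y y' [-> | [n ->]]; [apply (proj1 (proj1 HQ)) |].
  apply (proj2 (cut_extension_spec _)). intros q (a & [k ->] & <-).
  apply (proj1 (cut_extension_spec y')). exists (cutPsi (min k n) y').
  split; [exists (min k n); reflexivity | rewrite cutPsi_approx; reflexivity].
Qed.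

Lemma cut_extension_continuous : continuous below leQ cut_extension.
Proof.
  destruct HQ as [(_ & leQ_trans & _) _].
  split; [exact cut_extension_monotone |]. intros D x HD Hx. split.
  - intros q (d & Hd & <-). apply cut_extension_monotone, (proj1 Hx), Hd.
  - intros u Hu. apply (proj2 (cut_extension_spec x)). intros q (a & [n ->] & <-).
    destruct (directed_lub_cuts D x HD Hx n) as (d & Hd & Hnd).
    apply (leQ_trans _ (cut_extension d)); [| apply Hu; exists d; auto].
    apply (proj1 (cut_extension_spec d)). eexists; split; [| reflexivity].
    destruct Hnd as [Heq | [k Hk]].
    + exists n. rewrite <- Heq, cutPsi_approx, Nat.min_id. reflexivity.
    + exists (min n k). rewrite <- cutPsi_approx, <- Hk, cutPsi_approx, Nat.min_id. reflexivity.
Qed.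

Lemma cut_extension_unique h : continuous below leQ h ->
  (forall a, h (m a) = f a) -> forall y, h y = cut_extension y.
Proof.
  intros Hh Hhm. apply (continuous_determined_by_m leQ (proj1 HQ)); [exact Hh | exact cut_extension_continuous |].
  intros a. rewrite Hhm, cut_extension_m. reflexivity.
Qed.
End ExtensionToPsi.

(* m preserves the directed joins existing in PhiX: the join of the image is
   reached inside the image, since m x is finite. *)
Lemma m_lub D x : directed belowPhi D -> is_lub belowPhi D x -> is_lub below (image m D) (m x).
Proof.
  intros HD Hx. split; [intros z (d & Hd & <-); apply (proj1 Hx), Hd |].
  intros u Hu. destruct (m_finite x) as [N HN].
  destruct (finite_bound_greatest (m x) N HN (image m D)) as (x0 & (d0 & Hd0 & <-) & Hmax).
  - destruct HD as [[d Hd] _]. exists (m d), d. auto.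
  - intros z (d & Hd & <-). apply (proj1 Hx), Hd.
  - replace x with d0; [apply Hu; exists d0; auto |].
    eapply lub_unique; [exact belowPhi_poset | | exact Hx].
    apply lub_of_greatest; [exact Hd0 |]. intros d Hd. apply Hmax. exists d. auto.
Qed.

Theorem common_conservative_completion :
  exists (C : Type) (leC : C -> C -> Prop) (j : PsiX -> C),
    conservative_completion below leC j /\ conservative_completion belowPhi leC (fun a => j (m a)).
Proof.
  pose proof (ideal_completion_conservative below below_poset below_forest) as Hcompl.
  exists (Ideal below), (ideal_le below), (down below below_poset). split; [exact Hcompl |].
  apply (conservative_completion_restrict belowPhi below); [exact Hcompl | exact m_inj | | exact m_lub |].
  - intros a b. reflexivity.
  - intros Q leQ HQ f Hf. exists (cut_extension leQ HQ f Hf).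
    split; [apply cut_extension_continuous |].
    split; [apply cut_extension_m | apply cut_extension_unique].
Qed.

Definition belowF (w w' : F PsiX + X) : Prop :=
  exists y y', tau y = w /\ tau y' = w' /\ below y y'.

Lemma belowF_tau_inv w w' : belowF w w' <-> below (tau_inv w) (tau_inv w').
Proof.
  split.
  - intros (y & y' & <- & <- & H). rewrite !tau_inv_tau. exact H.
  - intros H. exists (tau_inv w), (tau_inv w'). rewrite !tau_tau_inv. auto.
Qed.

Lemma tau_inv_continuous : continuous belowF below tau_inv.
Proof.
  split; [intros w w' H; apply belowF_tau_inv, H |]. intros D x _ Hx. split.
  - intros y (w & Hw & <-). apply belowF_tau_inv, (proj1 Hx), Hw.
  - intros u Hu. rewrite <- (tau_inv_tau u). apply belowF_tau_inv, (proj2 Hx).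
    intros w Hw. apply belowF_tau_inv. rewrite tau_inv_tau. apply Hu. exists w. auto.
Qed.

Lemma tau_continuous : continuous below belowF tau.
Proof.
  split; [intros a b H; apply belowF_tau_inv; rewrite !tau_inv_tau; exact H |].
  intros D x _ Hx. split.
  - intros w (d & Hd & <-). apply belowF_tau_inv. rewrite !tau_inv_tau. apply (proj1 Hx), Hd.
  - intros u Hu. apply belowF_tau_inv. rewrite tau_inv_tau. apply (proj2 Hx).
    intros d Hd. rewrite <- (tau_inv_tau d). apply belowF_tau_inv, Hu. exists d. auto.
Qed.

Lemma tau_inv_unique_continuous g : continuous belowF below g ->
  (forall z, g (sumap (fmap F m) (fun x => x) z) = m (phi z)) -> forall w, g w = tau_inv w.
Proof.
  intros Hg Hgm w. rewrite <- (tau_tau_inv w), tau_inv_tau.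
  apply (continuous_determined_by_m below below_poset (fun y => g (tau y)) (fun y => y)).
  - exact (continuous_comp below belowF below tau g tau_continuous Hg).
  - apply continuous_id.
  - intros a. rewrite <- (phi_phi_inv a), Hm. apply Hgm.
Qed.

Theorem tau_inv_characterization :
  exists g : F PsiX + X -> PsiX,
    (forall y, g (tau y) = y) /\ (forall w, tau (g w) = w) /\
    continuous belowF below g /\
    (forall z, g (sumap (fmap F m) (fun x => x) z) = m (phi z)) /\
    (forall g' : F PsiX + X -> PsiX, continuous belowF below g' ->
       (forall z, g' (sumap (fmap F m) (fun x => x) z) = m (phi z)) -> forall w, g' w = g w).
Proof.
  exists tau_inv. split; [exact tau_inv_tau | split; [exact tau_tau_inv |]].
  split; [exact tau_inv_continuous | split; [| exact tau_inv_unique_continuous]].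
  intros z. rewrite <- Hm. apply tau_inv_tau.
Qed.

Section TreeRepresentation.
Variables (khat : itree Sig X -> PsiX)
  (Hk : forall t, tau (khat t) =
          sumap (fmap F khat) (fun x => x) (sumap (eps _) (fun x => x) (tau' t))).

Lemma cutPsi_khat n : forall s, cutPsi n (khat s) = hX eps phi (cut p' n s).
Proof.
  induction n as [| n IH]; intros s; [reflexivity |]. cbn [cutPsi]. rewrite Hk.
  destruct s as [x | k sym ts]; [reflexivity |]. simpl.
  rewrite fmap_fmap, <- (proj1 Heps). simpl. do 5 f_equal.
  apply functional_extensionality. intros i. apply IH.
Qed.

Lemma khat_emb t : khat (emb t) = m (hX eps phi t).
Proof.
  induction t as [x | k sym ts IH]; apply tau_inj; rewrite Hk; simpl; rewrite Hm; [reflexivity |].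
  simpl. f_equal. rewrite <- !(proj1 Heps). simpl. do 3 f_equal.
  apply functional_extensionality. exact IH.
Qed.

Definition choose_rep (u : F PsiX) : HSig Sig PsiX :=
  proj1_sig (constructive_indefinite_description _ (proj2 Heps PsiX u)).

Lemma choose_rep_spec u : eps PsiX (choose_rep u) = u.
Proof. exact (proj2_sig (constructive_indefinite_description _ (proj2 Heps PsiX u))). Qed.

CoFixpoint tree_of (y : PsiX) : itree Sig X :=
  match tau y with
  | inr x => ILeaf x
  | inl u => match choose_rep u with existT _ n (s, v) => INode s (fun i => tree_of (v i)) end
  end.

Lemma tree_of_unfold y : tree_of y =
  match tau y with
  | inr x => ILeaf x
  | inl u => match choose_rep u with existT _ n (s, v) => INode s (fun i => tree_of (v i)) end
  end.
Proof.
  transitivity (match tree_of y with ILeaf x => ILeaf x | INode s ts => INode s ts end);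
    [destruct (tree_of y); reflexivity |].
  simpl. destruct (tau y) as [u | x]; [destruct (choose_rep u) as [n [s v]] |]; reflexivity.
Qed.

(* khat . tree_of is a coalgebra endomorphism of PsiX, hence the identity. *)
Lemma khat_tree_of y : khat (tree_of y) = y.
Proof.
  apply (proj2 (Htau PsiX tau) (fun y => khat (tree_of y)) (fun y => y)).
  - intros z. rewrite Hk, tree_of_unfold. destruct (tau z) as [u | x]; [| reflexivity].
    pose proof (choose_rep_spec u) as Hrep. destruct (choose_rep u) as [n [s v]]. simpl.
    rewrite <- Hrep. f_equal.
    change (eps _ (existT _ n (s, fun i => tree_of (v i))))
      with (eps _ (Hmap tree_of (existT _ n (s, v)))).
    rewrite (proj1 Heps), fmap_fmap. reflexivity.
  - intros z. destruct (tau z); simpl; [rewrite fmap_id |]; reflexivity.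
Qed.

Lemma cut_le_below x y : cut_le eps phi p' khat x y <-> below x y.
Proof.
  split.
  - intros [-> | (s & s' & n & -> & -> & Hsim)]; [apply below_refl |]. right. exists n.
    replace (khat s) with (khat (emb (cut p' n s'))).
    + rewrite khat_emb. unfold approx. rewrite cutPsi_khat. reflexivity.
    + apply cuts_separate. intros k. rewrite !cutPsi_khat. symmetry. apply Hsim.
  - intros [-> | [n ->]]; [left; reflexivity |]. right.
    exists (tree_of (approx n y)), (tree_of y), n.
    rewrite !khat_tree_of. split; [reflexivity | split; [reflexivity |]]. intros k.
    rewrite <- !cutPsi_khat, khat_emb, <- cutPsi_khat, !khat_tree_of. reflexivity.
Qed.
End TreeRepresentation.
End CuttingOrder.

Theorem corollary5p14
  (F : SetFunctor) (HF : finitary F)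
  (Sig : nat -> Type) (eps : forall Y : Type, HSig Sig Y -> F Y)
  (Heps : @presentation Sig F eps)
  (X : Type) (HX : inhabited X) (p' : Sig 0 + X)
  (PhiX : Type) (phi : F PhiX + X -> PhiX) (Hphi : @initial_algebra F X PhiX phi)
  (PsiX : Type) (tau : PsiX -> F PsiX + X) (Htau : @terminal_coalgebra F X PsiX tau)
  (m : PhiX -> PsiX)
  (Hm : forall z, tau (m (phi z)) = sumap (fmap F m) (fun x => x) z)
  (khat : itree Sig X -> PsiX)
  (Hk : forall t, tau (khat t) = sumap (fmap F khat) (fun x => x) (sumap (eps _) (fun x => x) (tau' t))) :
  let lePsi := cut_le eps phi p' khat in
  let lePhi := fun a b : PhiX => lePsi (m a) (m b) in
  let leFPsi := fun w w' : F PsiX + X =>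
      exists y y', tau y = w /\ tau y' = w' /\ lePsi y y' in
  (exists (C : Type) (leC : C -> C -> Prop) (j : PsiX -> C),
      conservative_completion lePsi leC j /\
      conservative_completion lePhi leC (fun a => j (m a))) /\
  (exists g : F PsiX + X -> PsiX,
      (forall y, g (tau y) = y) /\ (forall w, tau (g w) = w) /\
      continuous leFPsi lePsi g /\
      (forall z, g (sumap (fmap F m) (fun x => x) z) = m (phi z)) /\
      (forall g' : F PsiX + X -> PsiX,
          continuous leFPsi lePsi g' ->
          (forall z, g' (sumap (fmap F m) (fun x => x) z) = m (phi z)) ->
          forall w, g' w = g w)).
Proof.
  intros lePsi lePhi leFPsi. unfold lePhi, leFPsi. clear lePhi leFPsi.
  assert (Horder : lePsi = below F Sig eps X p' PhiX phi PsiX tau m).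
  { apply functional_extensionality. intros x. apply functional_extensionality. intros y.
    apply propositional_extensionality.
    exact (cut_le_below F HF Sig eps Heps X p' PhiX phi Hphi PsiX tau Htau m Hm khat Hk x y). }
  clearbody lePsi. subst lePsi. split.
  - exact (common_conservative_completion F HF Sig eps Heps X p' PhiX phi Hphi PsiX tau Htau m Hm).
  - exact (tau_inv_characterization F HF Sig eps Heps X p' PhiX phi Hphi PsiX tau Htau m Hm).
Qed.
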